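(* Let ${\bf S}$ be any logic over $For$ (a consequence relation $\vdash_{\bf S}$) lying between ${\bf Km}$ and ${\bf T45m}$, i.e. $\Gamma\vdash_{\bf Km}\alpha$ implies $\Gamma\vdash_{\bf S}\alpha$, and $\Gamma\vdash_{\bf S}\alpha$ implies $\Gamma\vdash_{\bf T45m}\alpha$, for all $\Gamma\cup\{\alpha\}\subseteq For$. Then ${\bf S}$ is a conservative extension of classical propositional logic ${\bf PC}$: for every formula $\alpha$ built from propositional variables using only $\neg$ and $\to$, $\vdash_{\bf S}\alpha$ iff $\alpha$ is a classical tautology.
   Context: Formulas are built from a denumerable set of propositional variables by the unary connectives $\neg$, $\Box$ and the binary connective $\to$; $For$ is the set of all formulas. Abbreviations: $\Diamond\alpha:=\neg\Box\neg\alpha$, $\alpha\vee\beta:=\neg\alpha\to\beta$, $\alpha\wedge\beta:=\neg(\alpha\to\neg\beta)$. All Hilbert calculi below have as axioms all instances (over $For$) of the axiom schemas of a standard Hilbert calculus for classical propositional logic in the signature $\{\neg,\to\}$, plus the listed modal schemas, with modus ponens as the only rule; $\Gamma\vdash_{\bf L}\alpha$ means there is a derivation of $\alpha$ from $\Gamma$ in ${\bf L}$. ${\bf Km}$: (K') $\Diamond\alpha\to(\Box(\alpha\to\beta)\to(\Box\alpha\to\Box\beta))$; (K1') $\Diamond\neg\beta\to(\Box(\alpha\to\beta)\to(\Diamond\alpha\to\Diamond\beta))$; (K2') $\Diamond\alpha\to(\Diamond(\alpha\to\beta)\to(\Box\alpha\to\Diamond\beta))$; (M3') $(\Diamond\alpha\vee\Diamond\neg\alpha)\to(\Diamond\beta\to\Diamond(\alpha\to\beta))$;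 (M4') $\Diamond\neg\beta\to(\Diamond\neg\alpha\to\Diamond(\alpha\to\beta))$; (I1) $(\Box\alpha\wedge\Box\neg\alpha)\to(\Box(\alpha\to\beta)\wedge\Box\neg(\alpha\to\beta))$; (I2) $(\Box\beta\wedge\Box\neg\beta)\to(\Box(\alpha\to\beta)\wedge\Box\neg(\alpha\to\beta))$; (M1) $\neg\Diamond\alpha\to\Box(\alpha\to\beta)$; (M2) $\Box\beta\to\Box(\alpha\to\beta)$; (DN1) $\Box\alpha\to\Box\neg\neg\alpha$; (DN2) $\Box\neg\neg\alpha\to\Box\alpha$. ${\bf T45m}$: (K) $\Box(\alpha\to\beta)\to(\Box\alpha\to\Box\beta)$; (K1) $\Box(\alpha\to\beta)\to(\Diamond\alpha\to\Diamond\beta)$; (K2) $\Diamond(\alpha\to\beta)\to(\Box\alpha\to\Diamond\beta)$; (M1); (M2); (M3) $\Diamond\beta\to\Diamond(\alpha\to\beta)$; (M4) $\Diamond\neg\alpha\to\Diamond(\alpha\to\beta)$; (T) $\Box\alpha\to\alpha$; (DN1); (DN2); (4) $\Box\alpha\to\Box\Box\alpha$; (5) $\Diamond\Box\alpha\to\Box\alpha$. *)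

Inductive For : Type :=
| Var : nat -> For
| Neg : For -> For
| Box : For -> For
| Imp : For -> For -> For.

Definition Dia (a : For) : For := Neg (Box (Neg a)).
Definition Or (a b : For) : For := Imp (Neg a) b.
Definition And (a b : For) : For := Neg (Imp a (Neg b)).

(* A standard Hilbert calculus for classical propositional logic in {neg, ->}
   (Mendelson's axioms), instantiated over all of For. *)
Inductive PCAx : For -> Prop :=
| PC1 a b : PCAx (Imp a (Imp b a))
| PC2 a b c : PCAx (Imp (Imp a (Imp b c)) (Imp (Imp a b) (Imp a c)))
| PC3 a b : PCAx (Imp (Imp (Neg b) (Neg a)) (Imp (Imp (Neg b) a) b)).

Inductive KmModAx : For -> Prop :=
| KmK' a b : KmModAx (Imp (Dia a) (Imp (Box (Imp a b)) (Imp (Box a) (Box b))))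
| KmK1' a b : KmModAx (Imp (Dia (Neg b)) (Imp (Box (Imp a b)) (Imp (Dia a) (Dia b))))
| KmK2' a b : KmModAx (Imp (Dia a) (Imp (Dia (Imp a b)) (Imp (Box a) (Dia b))))
| KmM3' a b : KmModAx (Imp (Or (Dia a) (Dia (Neg a))) (Imp (Dia b) (Dia (Imp a b))))
| KmM4' a b : KmModAx (Imp (Dia (Neg b)) (Imp (Dia (Neg a)) (Dia (Imp a b))))
| KmI1 a b : KmModAx (Imp (And (Box a) (Box (Neg a)))
                         (And (Box (Imp a b)) (Box (Neg (Imp a b)))))
| KmI2 a b : KmModAx (Imp (And (Box b) (Box (Neg b)))
                         (And (Box (Imp a b)) (Box (Neg (Imp a b)))))
| KmM1 a b : KmModAx (Imp (Neg (Dia a)) (Box (Imp a b)))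
| KmM2 a b : KmModAx (Imp (Box b) (Box (Imp a b)))
| KmDN1 a : KmModAx (Imp (Box a) (Box (Neg (Neg a))))
| KmDN2 a : KmModAx (Imp (Box (Neg (Neg a))) (Box a)).

Inductive T45mModAx : For -> Prop :=
| TK a b : T45mModAx (Imp (Box (Imp a b)) (Imp (Box a) (Box b)))
| TK1 a b : T45mModAx (Imp (Box (Imp a b)) (Imp (Dia a) (Dia b)))
| TK2 a b : T45mModAx (Imp (Dia (Imp a b)) (Imp (Box a) (Dia b)))
| TM1 a b : T45mModAx (Imp (Neg (Dia a)) (Box (Imp a b)))
| TM2 a b : T45mModAx (Imp (Box b) (Box (Imp a b)))
| TM3 a b : T45mModAx (Imp (Dia b) (Dia (Imp a b)))
| TM4 a b : T45mModAx (Imp (Dia (Neg a)) (Dia (Imp a b)))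
| TT a : T45mModAx (Imp (Box a) a)
| TDN1 a : T45mModAx (Imp (Box a) (Box (Neg (Neg a))))
| TDN2 a : T45mModAx (Imp (Box (Neg (Neg a))) (Box a))
| T4 a : T45mModAx (Imp (Box a) (Box (Box a)))
| T5 a : T45mModAx (Imp (Dia (Box a)) (Box a)).

Definition KmAx (a : For) : Prop := PCAx a \/ KmModAx a.
Definition T45mAx (a : For) : Prop := PCAx a \/ T45mModAx a.

Inductive Derivable (Ax : For -> Prop) (Gamma : For -> Prop) : For -> Prop :=
| D_ax a : Ax a -> Derivable Ax Gamma a
| D_hyp a : Gamma a -> Derivable Ax Gamma a
| D_mp a b : Derivable Ax Gamma (Imp a b) -> Derivable Ax Gamma a ->
             Derivable Ax Gamma b.

Definition vdash_Km (Gamma : For -> Prop) (a : For) : Prop := Derivable KmAx Gamma a.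
Definition vdash_T45m (Gamma : For -> Prop) (a : For) : Prop := Derivable T45mAx Gamma a.

Definition consequence_relation (S : (For -> Prop) -> For -> Prop) : Prop :=
  (forall (Gamma : For -> Prop) a, Gamma a -> S Gamma a) /\
  (forall (Gamma Delta : For -> Prop) a,
      (forall b, Gamma b -> Delta b) -> S Gamma a -> S Delta a) /\
  (forall (Gamma Delta : For -> Prop) a,
      (forall b, Delta b -> S Gamma b) -> S Delta a -> S Gamma a).

Definition empty_set : For -> Prop := fun _ => False.

Fixpoint box_free (a : For) : Prop :=
  match a with
  | Var _ => True
  | Neg b => box_free b
  | Box _ => False
  | Imp b c => box_free b /\ box_free c
  end.

(* Classical two-valued evaluation (Box clause irrelevant on box-free formulas). *)
Fixpoint eval (v : nat -> bool) (a : For) : bool :=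
  match a with
  | Var n => v n
  | Neg b => negb (eval v b)
  | Box _ => false
  | Imp b c => orb (negb (eval v b)) (eval v c)
  end.

Definition tautology (a : For) : Prop := forall v : nat -> bool, eval v a = true.

(* Reading [Box] as the identity turns every axiom of T45m into a classical
   tautology, and modus ponens preserves this, so every theorem of S (hence of
   T45m) becomes a tautology once its boxes are erased; box-free formulas are
   unchanged by the erasure.  Conversely, Km contains the axioms of the
   propositional calculus PC, which is complete by Kalmar's argument: a formula
   or its negation is derivable from the literals fixed by a valuation, and a
   tautology survives the elimination of these literals one at a time. *)

From Stdlib Require Import Lia PeanoNat.

Lemma Derivable_mono (Ax Ax' Gamma Gamma' : For -> Prop) (a : For) :
  (forall b, Ax b -> Ax' b) -> (forall b, Gamma b -> Gamma' b) ->
  Derivable Ax Gamma a -> Derivable Ax' Gamma' a.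
Proof.
  intros HAx HGamma; induction 1.
  - apply D_ax; auto.
  - apply D_hyp; auto.
  - eapply D_mp; eauto.
Qed.

Lemma vdash_Km_of_PC (Gamma : For -> Prop) (a : For) :
  Derivable PCAx Gamma a -> vdash_Km Gamma a.
Proof. apply Derivable_mono; unfold KmAx; auto. Qed.

Fixpoint erase_box (a : For) : For :=
  match a with
  | Var n => Var n
  | Neg b => Neg (erase_box b)
  | Box b => erase_box b
  | Imp b c => Imp (erase_box b) (erase_box c)
  end.

Lemma erase_box_free (a : For) : box_free a -> erase_box a = a.
Proof.
  induction a as [n | b IHb | b _ | b IHb c IHc]; simpl; try tauto.
  - intros Hb; rewrite IHb; auto.
  - intros [Hb Hc]; rewrite IHb, IHc; auto.
Qed.

Lemma T45mAx_erase_tautology (a : For) : T45mAx a -> tautology (erase_box a).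
Proof.
  intros [Ha | Ha] v; destruct Ha; simpl;
    repeat match goal with |- context [eval v ?x] => destruct (eval v x) end;
    reflexivity.
Qed.

Lemma vdash_T45m_erase_tautology (a : For) :
  vdash_T45m empty_set a -> tautology (erase_box a).
Proof.
  induction 1 as [a Ha | a Ha | a b _ IHab _ IHa]; intros v.
  - apply T45mAx_erase_tautology; exact Ha.
  - contradiction.
  - specialize (IHab v); simpl in IHab; rewrite (IHa v) in IHab; exact IHab.
Qed.

Section PropositionalCalculus.

Notation pc := (Derivable PCAx).

Definition add_premise (Gamma : For -> Prop) (h : For) : For -> Prop :=
  fun x => x = h \/ Gamma x.

Ltac pc_ax := apply D_ax; constructor.
Ltac pc_mp a := apply (D_mp _ _ a).

Lemma pc_premise (Gamma : For -> Prop) (h : For) : pc (add_premise Gamma h) h.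
Proof. apply D_hyp; left; reflexivity. Qed.

Lemma pc_premise2 (Gamma : For -> Prop) (h h' : For) :
  pc (add_premise (add_premise Gamma h') h) h'.
Proof. apply D_hyp; right; left; reflexivity. Qed.

Lemma pc_imp_refl (Gamma : For -> Prop) (a : For) : pc Gamma (Imp a a).
Proof.
  pc_mp (Imp a (Imp a a)); [| pc_ax].
  pc_mp (Imp a (Imp (Imp a a) a)); pc_ax.
Qed.

Lemma pc_deduction (Gamma : For -> Prop) (h b : For) :
  pc (add_premise Gamma h) b -> pc Gamma (Imp h b).
Proof.
  induction 1 as [a Ha | a [-> | Ha] | a b _ IHab _ IHa].
  - pc_mp a; [pc_ax | apply D_ax; exact Ha].
  - apply pc_imp_refl.
  - pc_mp a; [pc_ax | apply D_hyp; exact Ha].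
  - pc_mp (Imp h a); [| exact IHa].
    pc_mp (Imp h (Imp a b)); [pc_ax | exact IHab].
Qed.

Lemma pc_dneg_elim (Gamma : For -> Prop) (a : For) : pc Gamma (Imp (Neg (Neg a)) a).
Proof.
  apply pc_deduction.
  pc_mp (Imp (Neg a) (Neg a)); [| apply pc_imp_refl].
  pc_mp (Imp (Neg a) (Neg (Neg a))); [pc_ax |].
  pc_mp (Neg (Neg a)); [pc_ax | apply pc_premise].
Qed.

Lemma pc_dneg_intro (Gamma : For -> Prop) (a : For) : pc Gamma (Imp a (Neg (Neg a))).
Proof.
  apply pc_deduction.
  pc_mp (Imp (Neg (Neg (Neg a))) a).
  - pc_mp (Imp (Neg (Neg (Neg a))) (Neg a)); [pc_ax | apply pc_dneg_elim].
  - pc_mp a; [pc_ax | apply pc_premise].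
Qed.

Lemma pc_contra (Gamma : For -> Prop) (a b : For) :
  pc Gamma (Imp (Imp (Neg b) (Neg a)) (Imp a b)).
Proof.
  do 2 apply pc_deduction.
  pc_mp (Imp (Neg b) a).
  - pc_mp (Imp (Neg b) (Neg a)); [pc_ax | apply pc_premise2].
  - pc_mp a; [pc_ax | apply pc_premise].
Qed.

Lemma pc_explosion (Gamma : For -> Prop) (a b : For) : pc Gamma (Imp (Neg a) (Imp a b)).
Proof.
  apply pc_deduction.
  pc_mp (Imp (Neg b) (Neg a)); [apply pc_contra |].
  pc_mp (Neg a); [pc_ax | apply pc_premise].
Qed.

Lemma pc_contrapos (Gamma : For -> Prop) (a b : For) :
  pc Gamma (Imp (Imp a b) (Imp (Neg b) (Neg a))).
Proof.
  apply pc_deduction.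
  pc_mp (Imp (Neg (Neg a)) (Neg (Neg b))); [apply pc_contra |].
  apply pc_deduction.
  pc_mp b; [apply pc_dneg_intro |].
  pc_mp a; [apply pc_premise2 |].
  pc_mp (Neg (Neg a)); [apply pc_dneg_elim | apply pc_premise].
Qed.

Lemma pc_neg_imp (Gamma : For -> Prop) (a b : For) :
  pc Gamma (Imp a (Imp (Neg b) (Neg (Imp a b)))).
Proof.
  apply pc_deduction.
  pc_mp (Imp (Imp a b) b); [apply pc_contrapos |].
  apply pc_deduction.
  pc_mp a; [apply pc_premise | apply pc_premise2].
Qed.

Lemma pc_cases (Gamma : For -> Prop) (a b : For) :
  pc Gamma (Imp (Imp a b) (Imp (Imp (Neg a) b) b)).
Proof.
  do 2 apply pc_deduction.
  pc_mp (Imp (Neg b) (Neg a)).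
  - pc_mp (Imp (Neg b) (Neg (Neg a))); [pc_ax |].
    pc_mp (Imp (Neg a) b); [apply pc_contrapos | apply pc_premise].
  - pc_mp (Imp a b); [apply pc_contrapos | apply pc_premise2].
Qed.

Definition literal (v : nat -> bool) (n : nat) : For :=
  if v n then Var n else Neg (Var n).

Definition literals_below (v : nat -> bool) (k : nat) : For -> Prop :=
  fun x => exists n, n < k /\ x = literal v n.

Definition signed (v : nat -> bool) (a : For) : For :=
  if eval v a then a else Neg a.

Fixpoint max_var (a : For) : nat :=
  match a with
  | Var n => n
  | Neg b | Box b => max_var b
  | Imp b c => Nat.max (max_var b) (max_var c)
  end.

Lemma pc_kalmar (v : nat -> bool) (a : For) (k : nat) :
  box_free a -> max_var a < k -> pc (literals_below v k) (signed v a).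
Proof.
  induction a as [n | a IHa | a _ | a IHa b IHb]; simpl; intros Hbf Hk; try tauto.
  - apply D_hyp; exists n; split; [exact Hk |].
    unfold signed, literal; simpl; destruct (v n); reflexivity.
  - specialize (IHa Hbf Hk); unfold signed in *; simpl.
    destruct (eval v a); simpl; [| exact IHa].
    pc_mp a; [apply pc_dneg_intro | exact IHa].
  - destruct Hbf as [Hbfa Hbfb].
    specialize (IHa Hbfa ltac:(lia)); specialize (IHb Hbfb ltac:(lia)).
    unfold signed in *; simpl.
    destruct (eval v a), (eval v b); simpl in *.
    + pc_mp b; [pc_ax | exact IHb].
    + pc_mp (Neg b); [| exact IHb].
      pc_mp a; [apply pc_neg_imp | exact IHa].
    + pc_mp b; [pc_ax | exact IHb].
    + pc_mp (Neg a); [apply pc_explosion | exact IHa].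
Qed.

Definition update (v : nat -> bool) (k : nat) (b : bool) : nat -> bool :=
  fun n => if Nat.eqb n k then b else v n.

Lemma literals_below_update (v : nat -> bool) (k : nat) (b : bool) (x : For) :
  literals_below (update v k b) (S k) x ->
  add_premise (literals_below v k) (literal (update v k b) k) x.
Proof.
  intros [n [Hn ->]].
  destruct (Nat.eq_dec n k) as [-> | Hne]; [left; reflexivity |].
  right; exists n; split; [lia |].
  unfold literal, update; rewrite (proj2 (Nat.eqb_neq n k) Hne); reflexivity.
Qed.

Lemma pc_eliminate_literal (a : For) (k : nat) :
  (forall v, pc (literals_below v (S k)) a) ->
  forall v, pc (literals_below v k) a.
Proof.
  intros Ha v.
  assert (Hb : forall b, pc (literals_below v k) (Imp (literal (update v k b) k) a)).
  { intros b; apply pc_deduction.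
    apply (Derivable_mono PCAx PCAx (literals_below (update v k b) (S k)));
      [auto | apply literals_below_update | apply Ha]. }
  pose proof (Hb true) as Htrue; pose proof (Hb false) as Hfalse.
  unfold literal, update in Htrue, Hfalse; rewrite Nat.eqb_refl in Htrue, Hfalse.
  pc_mp (Imp (Neg (Var k)) a); [| exact Hfalse].
  pc_mp (Imp (Var k) a); [apply pc_cases | exact Htrue].
Qed.

Lemma pc_eliminate_literals (a : For) (k m : nat) :
  (forall v, pc (literals_below v (k + m)) a) ->
  forall v, pc (literals_below v m) a.
Proof.
  revert m; induction k as [| k IHk]; intros m Ha; [exact Ha |].
  apply pc_eliminate_literal, IHk.
  rewrite <- Nat.add_succ_comm; exact Ha.
Qed.

Theorem pc_complete (a : For) : box_free a -> tautology a -> pc empty_set a.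
Proof.
  intros Hbf Htaut.
  assert (Hall : forall v, pc (literals_below v (S (max_var a))) a).
  { intros v; pose proof (pc_kalmar v a (S (max_var a)) Hbf ltac:(lia)) as Hv.
    unfold signed in Hv; rewrite Htaut in Hv; exact Hv. }
  rewrite <- (Nat.add_0_r (S (max_var a))) in Hall.
  apply (Derivable_mono PCAx PCAx (literals_below (fun _ => true) 0));
    [auto | intros x [n [Hn _]]; lia | exact (pc_eliminate_literals a _ 0 Hall _)].
Qed.

End PropositionalCalculus.

Theorem mainTheorem17 (S : (For -> Prop) -> For -> Prop) :
  consequence_relation S ->
  (forall (Gamma : For -> Prop) (a : For), vdash_Km Gamma a -> S Gamma a) ->
  (forall (Gamma : For -> Prop) (a : For), S Gamma a -> vdash_T45m Gamma a) ->
  forall a : For, box_free a -> (S empty_set a <-> tautology a).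
Proof.
  intros _ Km_S S_T45m a Hbf; split.
  - intros HS.
    rewrite <- (erase_box_free a Hbf).
    apply vdash_T45m_erase_tautology, S_T45m, HS.
  - intros Htaut.
    apply Km_S, vdash_Km_of_PC, pc_complete; assumption.
Qed.
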